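(* The theory TRC$^*$ is inconsistent.
   Context: TRC$^*$ is a first-order theory with equality. Its language has a binary function ''application'', written by juxtaposition ($xy$ denotes $x$ applied to $y$), with the convention that juxtaposition associates to the left ($xyz=(xy)z$). It also has constants $K$, $\mathrm{Abst}$, $\mathrm{Eq}$, $p_1$, $p_2$ and a binary function $\langle x,y\rangle$ (pairing); here $K$ is a constant, i.e. an object of the domain. The axioms of TRC$^*$ are: (I$^*$) $K\,x\,y=x$; (II) $p_1\langle x_1,x_2\rangle=x_1$ and $p_2\langle x_1,x_2\rangle=x_2$; (III) $\langle p_1x,p_2x\rangle=x$; (IV) $\langle f,g\rangle x=\langle fx,gx\rangle$; (V$^*$) $\mathrm{Abst}\,x\,y\,z=x\,(K z)\,(y\,z)$; (VI) $\mathrm{Eq}\langle x,y\rangle=p_1$ if $x=y$, and $\mathrm{Eq}\langle x,y\rangle=p_2$ if $x\neq y$; (VII) extensionality: if $fx=gx$ for all $x$, then $f=g$; (VIII) $p_1\neq p_2$. *)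

(* The axioms (I-star)-(VIII) of TRC-star, with app f x standing for "f x". *)
Definition TRCstar_model (D : Type) (app : D -> D -> D)
  (K Abst Eq p1 p2 : D) (pair : D -> D -> D) : Prop :=
  (forall x y, app (app K x) y = x) /\
  (forall x1 x2, app p1 (pair x1 x2) = x1) /\
               (forall x1 x2, app p2 (pair x1 x2) = x2) /\
  (forall x, pair (app p1 x) (app p2 x) = x) /\
  (forall f g x, app (pair f g) x = pair (app f x) (app g x)) /\
  (forall x y z,
                  app (app (app Abst x) y) z = app (app x (app K z)) (app y z)) /\
  (forall x y, x = y -> app Eq (pair x y) = p1) /\
               (forall x y, x <> y -> app Eq (pair x y) = p2) /\
  (forall f g, (forall x, app f x = app g x) -> f = g) /\
  p1 <> p2.

(* K and Abst yield a composition and a self-application combinator, and with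
   them a Curry-style fixed point: for every f there is a t with t w = f t for
   all w.  Take f x = Eq <x, K p2>.  If t = K p2, then t is constantly p1, so
   by extensionality K p2 = t = K p1 and p1 = p2.  Otherwise t is constantly
   p2, so t = K p2 by extensionality after all. *)

From Stdlib Require Import Classical.

Section Combinators.

Context {D : Type}.
Variables (app : D -> D -> D) (K Abst : D).
Local Infix "·" := app (at level 40, left associativity).

Hypothesis K_app : forall x y, K · x · y = x.
Hypothesis Abst_app : forall x y z, Abst · x · y · z = x · (K · z) · (y · z).

Definition compose : D := Abst · (K · Abst) · K.

Lemma compose_app a g u : compose · a · g · u = a · (g · u).
Proof. unfold compose. rewrite Abst_app, K_app, Abst_app, K_app. reflexivity. Qed.

Definition self_app : D := Abst · Abst · K.

Lemma self_app_app z w : self_app · z · w = z · z.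
Proof. unfold self_app. rewrite Abst_app, Abst_app, !K_app. reflexivity. Qed.

Lemma const_fixpoint f : exists t, forall w, t · w = f · t.
Proof.
  set (P := compose · (compose · f) · self_app).
  exists (P · P); intro w.
  unfold P at 1. rewrite compose_app, compose_app, self_app_app. reflexivity.
Qed.

End Combinators.

Section Pairing.

Context {D : Type}.
Variables (app : D -> D -> D) (K p1 p2 : D) (pair : D -> D -> D).
Local Infix "·" := app (at level 40, left associativity).

Hypothesis K_app : forall x y, K · x · y = x.
Hypothesis pair_proj : forall x, pair (p1 · x) (p2 · x) = x.
Hypothesis pair_app : forall f g x, pair f g · x = pair (f · x) (g · x).

Lemma pair_proj_app x : pair p1 p2 · x = x.
Proof. rewrite pair_app. apply pair_proj. Qed.

Lemma pair_const_app c x : pair (pair p1 p2) (K · c) · x = pair x c.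
Proof. rewrite pair_app, pair_proj_app, K_app. reflexivity. Qed.

End Pairing.

Theorem mainTheorem7 :
  forall (D : Type) (app : D -> D -> D) (K Abst Eq p1 p2 : D)
         (pair : D -> D -> D),
    ~ TRCstar_model D app K Abst Eq p1 p2 pair.
Proof.
  intros D app K Abst Eq p1 p2 pair
    (K_app & _ & _ & pair_proj & pair_app & Abst_app & Eq_eq & Eq_neq & ext & p1_neq_p2).
  set (q := app K p2).
  set (f := app (app (compose app K Abst) Eq) (pair (pair p1 p2) (app K q))).
  assert (f_app : forall x, app f x = app Eq (pair x q)).
  { intro x. unfold f.
    rewrite compose_app, pair_const_app by assumption. reflexivity. }
  destruct (const_fixpoint app K Abst K_app Abst_app f) as [t t_app].
  destruct (classic (t = q)) as [t_eq_q | t_neq_q].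
  - assert (t_eq_Kp1 : t = app K p1).
    { apply ext. intro w. rewrite t_app, f_app, K_app. apply Eq_eq, t_eq_q. }
    apply p1_neq_p2.
    rewrite <- (K_app p1 p1), <- t_eq_Kp1, t_eq_q. apply K_app.
  - apply t_neq_q, ext. intro w.
    rewrite t_app, f_app, (Eq_neq _ _ t_neq_q). unfold q. rewrite K_app. reflexivity.
Qed.
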